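(* Let $\mathcal T$ be an admissible tree. Then: (i) every inner edge incident to a white-empty vertex is of type $(q_\circ=2:q_\bullet=1)$; (ii) every NHP inner edge $e$, joining a black-occupied vertex $v$ to a white-occupied vertex $w$, is of type $(q_\circ=-1:q_\bullet=4)$, the two other edges at $v$ are inner edges to white-empty vertices, one of the other two edges at $w$ joins $w$ to a black-empty vertex carrying two buds, and the remaining edge at $w$ is either a leaf or an inner edge to a black-empty vertex; (iii) every inner edge joining a black-empty vertex to a white-occupied vertex is of type $(2:1)$ or $(5:-2)$, and in the latter case the black-empty vertex carries two buds and the white-occupied vertex is incident to exactly one NHP inner edge.
   Context: A blossom tree is a plane tree whose inner vertices are black or white, all of degree 3, whose inner edges join black to white inner vertices, and whose degree-one ends are buds (attached to black inner vertices, charge $-1$) or leaves (attached to white inner vertices, charge $+1$), with total charge $3$. Removing an inner edge $e$ splits the tree into two parts; $q_\circ$ (resp. $q_\bullet$) is the total charge of the part containing the white (resp. black) endpoint; $e$ is of type $(q_\circ:q_\bullet)$, and is regular if $q_\circ\ge0$ and $q_\bullet\le1$. Each inner vertex is empty or occupied by a particle; an inner edge is HP if at most one endpoint is occupied, NHP if both are. An admissible tree is such a tree in which every HP inner edge is regular and every NHP inner edge is non-regular. *)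

From mathcomp Require Import all_boot all_order all_algebra.
Set Implicit Arguments. Unset Strict Implicit. Unset Printing Implicit Defensive.
Import GRing.Theory Num.Theory.
Local Open Scope ring_scope.

Inductive vkind := Black | White | Bud | Leaf.

Definition isBlack (k : vkind) : bool := if k is Black then true else false.
Definition isWhite (k : vkind) : bool := if k is White then true else false.
Definition isBud   (k : vkind) : bool := if k is Bud then true else false.
Definition isLeaf  (k : vkind) : bool := if k is Leaf then true else false.
Definition isInner (k : vkind) : bool := isBlack k || isWhite k.

Definition charge (k : vkind) : int :=
  match k with Bud => -1 | Leaf => 1 | _ => 0 end.

Section Blossom.
Variables (V : finType) (e : rel V) (kind : V -> vkind) (occ : V -> bool).

Definition deg (x : V) : nat := #|[set y | e x y]|.

Definition cut (u w : V) : rel V :=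
  [rel x y | e x y && ~~ ((x == u) && (y == w)) && ~~ ((x == w) && (y == u))].

Definition is_tree : Prop :=
  [/\ symmetric e, irreflexive e,
      (forall x y, connect e x y) &
      (forall x y, e x y -> ~~ connect (cut x y) x y)].

Definition total_charge : int := \sum_(x : V) charge (kind x).

(* A blossom tree (the planar embedding is irrelevant for the statement). *)
Definition blossom_tree : Prop :=
  is_tree /\
  (forall x, isInner (kind x) -> deg x = 3%N) /\
  (forall x, ~~ isInner (kind x) -> deg x = 1%N) /\
  (forall x y, e x y -> isBud (kind x) -> isBlack (kind y)) /\
  (forall x y, e x y -> isLeaf (kind x) -> isWhite (kind y)) /\
  (forall x y, e x y -> isInner (kind x) -> isInner (kind y) ->
     (isBlack (kind x) && isWhite (kind y)) || (isWhite (kind x) && isBlack (kind y))) /\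
  total_charge = 3.

Definition part_charge (x y : V) : int :=
  \sum_(z | connect (cut x y) x z) charge (kind z).

Definition q_white (w b : V) : int := part_charge w b.
Definition q_black (w b : V) : int := part_charge b w.

Definition wb_edge (w b : V) : bool :=
  [&& e w b, isWhite (kind w) & isBlack (kind b)].

Definition regular (w b : V) : Prop := 0 <= q_white w b /\ q_black w b <= 1.

Definition NHP (w b : V) : bool := occ w && occ b.
Definition HP (w b : V) : bool := ~~ NHP w b.

Definition admissible : Prop :=
  blossom_tree /\
  forall w b, wb_edge w b ->
    (HP w b -> regular w b) /\ (NHP w b -> ~ regular w b).

End Blossom.

(* Write pc x y for the charge of the component of x after deleting the edge
   xy, so that pc x y + pc y x = 3 and, at an inner vertex x, pc x y is the sum
   of pc z x over the two other neighbours z.  Induction over these branches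
   shows that pc x y is 1 mod 3 when x is black or a leaf and -1 mod 3 when x is
   white or a bud.  Hence an edge from a white w to a black b is regular iff
   pc w b >= 2, and otherwise pc w b <= -1 and pc b w >= 4.  Everything then
   follows from counting around one vertex: at a white-empty vertex every other
   branch carries at most 1; at a black-empty vertex each other branch carries
   -1 (a bud) or at least 2; at the black end of an NHP edge the other two
   branches must both carry 2, which only white-empty neighbours provide; and
   around an occupied white vertex the branches carry 1, 4 or -2, which leaves
   one combination for each of the sums -1 and 5. *)

From mathcomp Require Import all_boot all_order all_algebra.
From mathcomp Require Import zify lra.
Import GRing.Theory Num.Theory.
Local Open Scope ring_scope.

Definition branch_residue (k : vkind) : int :=
  match k with Black | Leaf => 1 | White | Bud => -1 end.

Section Branches.
Variables (V : finType) (e : rel V).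

Definition branch (x y : V) : {set V} := [set t | connect (cut e x y) x t].

Lemma cutC x y : cut e x y =2 cut e y x.
Proof. by move=> s t; rewrite /cut /= -!andbA [X in _ && X]andbC. Qed.

Lemma cut_away x a b s t : (x == a) || (x == b) -> s != x -> t != x ->
  cut e a b s t = e s t.
Proof.
by move=> /orP[] /eqP <- sx tx; rewrite /cut /= (negbTE sx) (negbTE tx) /= !(andbF, andbT).
Qed.

Lemma path_cut_away {x a b u p} : (x == a) || (x == b) -> all (predC1 x) (u :: p) ->
  path (cut e a b) u p = path e u p.
Proof.
move=> xab avoid_x; apply: (eq_in_path _ avoid_x) => s t sx tx.
exact: cut_away xab sx tx.
Qed.

Lemma card_other_neighbors {x y} : e x y ->
  deg e x = #|[set z | e x z && (z != y)]|.+1.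
Proof.
have -> : [set z | e x z && (z != y)] = [set z | e x z] :\ y.
  by apply/setP => z; rewrite !inE andbC.
by move=> exy; rewrite /deg (cardsD1 y) inE exy.
Qed.

Hypotheses (e_sym : symmetric e) (e_irr : irreflexive e)
  (e_connected : forall x y, connect e x y)
  (e_bridge : forall x y, e x y -> ~~ connect (cut e x y) x y).

Lemma cut_sym x y : symmetric (cut e x y).
Proof.
move=> s t; rewrite /cut /= e_sym -!andbA [X in _ && X]andbC.
by rewrite [(t == x) && _]andbC [(t == y) && _]andbC.
Qed.

Lemma branch_root x y : x \in branch x y.
Proof. by rewrite inE connect0. Qed.

Lemma branch_path_avoid {x y p} : e x y -> path (cut e x y) x p -> all (predC1 y) (x :: p).
Proof.
move=> exy xp; apply/allP => s s_p /=.
by have := path_connect xp s_p; apply: contraTneq => ->; apply: e_bridge.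
Qed.

Lemma end_notin_branch {x y} : e x y -> y \notin branch x y.
Proof. by rewrite inE; apply: e_bridge. Qed.

Lemma branch_connect_cut y {x z t} : e z x -> t \in branch z x -> connect (cut e x y) z t.
Proof.
move=> ezx /[!inE] /connectP[p zp ->]; apply/connectP; exists p => //.
have avoid_x := branch_path_avoid ezx zp.
by rewrite (path_cut_away _ avoid_x) ?eqxx //; rewrite (path_cut_away _ avoid_x) ?eqxx ?orbT in zp.
Qed.

Lemma branch_sub {x y z} : e x y -> e x z -> z != y -> branch z x \subset branch x y :\ x.
Proof.
move=> exy exz zy; have ezx : e z x by rewrite e_sym.
apply/subsetP => t tz; rewrite !inE; apply/andP; split.
  by apply: contraTneq tz => ->; apply: end_notin_branch.
have xz : cut e x y x z.
  rewrite /cut /= exz eqxx (negbTE zy) /=.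
  by apply: contraTN exy => /andP[/eqP <- _]; rewrite e_irr.
exact: connect_trans (connect1 xz) (branch_connect_cut y ezx tz).
Qed.

Lemma branch_child {x y t} : t \in branch x y -> t != x ->
  exists2 z, e x z && (z != y) & t \in branch z x.
Proof.
rewrite inE => /connectP[p xp ->]; case/shortenP: xp => -[|z q] //=; first by rewrite eqxx.
rewrite {1}/cut /= eqxx /= => /andP[/andP[/andP[exz zy] _] zq] /andP[x_zq _] _ _.
have avoid_x : all (predC1 x) (z :: q) by apply/allP => s sq /=; apply: contraNneq x_zq => <-.
exists z; rewrite ?exz ?zy // inE; apply/connectP; exists q => //.
by rewrite (path_cut_away _ avoid_x) ?eqxx ?orbT //; rewrite (path_cut_away _ avoid_x) ?eqxx in zq.
Qed.

Lemma branch_disjoint {x z1 z2} : e x z1 -> e x z2 -> z1 != z2 ->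
  [disjoint branch z1 x & branch z2 x].
Proof.
move=> exz1 exz2 z12; apply/pred0P => t /=; apply/negbTE/andP => -[t1 t2].
have ez1x : e z1 x by rewrite e_sym.
have xz2 : cut e z1 x x z2.
  rewrite /cut /= exz2 eqxx [z2 == z1]eq_sym (negbTE z12) /= andbT.
  by apply: contraTN exz2 => /andP[/eqP -> /eqP ->]; rewrite e_irr.
have c_sym : connect_sym (cut e z1 x) by apply/sym_connect_sym/cut_sym.
move/negP: (end_notin_branch ez1x); apply; rewrite inE in t1; rewrite inE.
apply: connect_trans t1 _; rewrite c_sym; apply: connect_trans (connect1 xz2) _.
by rewrite (eq_connect (cutC z1 x)); apply: branch_connect_cut t2; rewrite e_sym.
Qed.

Lemma setC_branch x y : e x y -> ~: branch x y = branch y x.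
Proof.
move=> exy; set c := cut e x y.
have c_sym : connect_sym c by apply/sym_connect_sym/cut_sym.
have cover : closed e [predU connect c x & connect c y].
  apply/intro_closed; first by apply: sym_connect_sym.
  move=> s t est; rewrite !inE; case cst: (c s t).
    by case/orP=> cs; rewrite (connect_trans cs (connect1 cst)) ?orbT.
  move: cst; rewrite /c /cut /= est /= => /negbT; rewrite negb_and !negbK.
  by case/orP=> /andP[_ /eqP ->]; rewrite connect0 ?orbT.
apply/setP => t; rewrite !inE -(eq_connect (cutC x y)) -/c.
have := closed_connect cover (e_connected x t); rewrite !inE connect0 /= => /esym.
case xt: (connect c x t) => /=; last by move=> ->.
move=> _; apply/esym/negbTE/negP => yt.
by move/negP: (e_bridge _ _ exy); apply; rewrite (connect_trans xt) // c_sym.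
Qed.

Lemma branch_rec x y : e x y ->
  branch x y = x |: \bigcup_(z | e x z && (z != y)) branch z x.
Proof.
move=> exy; apply/setP => t; rewrite in_setU1; have [-> | tx] /= := eqVneq t x.
  exact: branch_root.
apply/idP/bigcupP => [tb | [z /andP[exz zy] tz]]; first exact: branch_child.
by have /subsetP/(_ t tz)/setD1P[] := branch_sub exy exz zy.
Qed.

Lemma branch_proper {x y z} : e x y -> e x z -> z != y -> branch z x \proper branch x y.
Proof.
by move=> exy exz zy; apply: sub_proper_trans (branch_sub exy exz zy) (properD1 (branch_root x y)).
Qed.

Lemma branch_ind (P : V -> V -> Prop) :
  (forall x y, e x y -> (forall z, e x z -> z != y -> P z x) -> P x y) ->
  forall x y, e x y -> P x y.
Proof.
move=> IH x y; have [n] := ubnP #|branch x y|; elim: n x y => // n IHn x y lt_n exy.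
apply: (IH x y exy) => z exz zy; apply: IHn; last by rewrite e_sym.
exact: leq_trans (proper_card (branch_proper exy exz zy)) lt_n.
Qed.

Lemma sum_branch_split (R : nmodType) (F : V -> R) x y : e x y ->
  \sum_t F t = \sum_(t in branch x y) F t + \sum_(t in branch y x) F t.
Proof.
move=> exy; rewrite (bigID (mem (branch x y))) /= -(setC_branch x y exy).
by congr (_ + _); apply: eq_bigl => t; rewrite in_setC.
Qed.

Lemma sum_branch_rec (R : nmodType) (F : V -> R) x y : e x y ->
  \sum_(t in branch x y) F t = F x + \sum_(z | e x z && (z != y)) \sum_(t in branch z x) F t.
Proof.
move=> exy; rewrite branch_rec // big_setU1 /=; last first.
  apply/bigcupP => -[z /andP[exz zy] xz].
  by have := subsetP (branch_sub exy exz zy) x xz; rewrite !inE eqxx.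
congr (_ + _); rewrite (big_mkcond _ (fun z => branch z x)) /= partition_disjoint_bigcup.
  rewrite [RHS]big_mkcond; apply: eq_bigr => z _.
  by case: ifP => _; rewrite ?big_set0.
move=> z1 z2 z12; case: ifP => [/andP[exz1 _] | _]; last by rewrite disjoints_subset sub0set.
case: ifP => [/andP[exz2 _] | _]; last by rewrite disjoint_sym disjoints_subset sub0set.
exact: branch_disjoint.
Qed.

Section PartCharges.
Variable kind : V -> vkind.
Hypotheses (deg_inner : forall x, isInner (kind x) -> deg e x = 3%N)
  (deg_end : forall x, ~~ isInner (kind x) -> deg e x = 1%N)
  (bud_black : forall x y, e x y -> isBud (kind x) -> isBlack (kind y))
  (leaf_white : forall x y, e x y -> isLeaf (kind x) -> isWhite (kind y))
  (inner_bw : forall x y, e x y -> isInner (kind x) -> isInner (kind y) ->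
     (isBlack (kind x) && isWhite (kind y)) || (isWhite (kind x) && isBlack (kind y)))
  (charge3 : total_charge kind = 3).

Local Notation pc := (part_charge e kind).

Lemma part_chargeE x y : pc x y = \sum_(t in branch x y) charge (kind t).
Proof. by apply: eq_bigl => t; rewrite inE. Qed.

Lemma part_chargeC {x y} : e x y -> pc x y + pc y x = 3.
Proof.
by move=> exy; rewrite !part_chargeE -charge3 /total_charge (sum_branch_split _ _ x y).
Qed.

Lemma part_charge_rec x y : e x y ->
  pc x y = charge (kind x) + \sum_(z | e x z && (z != y)) pc z x.
Proof.
move=> exy; rewrite part_chargeE sum_branch_rec //.
by under [in RHS]eq_bigr do rewrite part_chargeE.
Qed.

Lemma part_charge_end x y : ~~ isInner (kind x) -> e x y -> pc x y = charge (kind x).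
Proof.
move=> end_x exy; have := card_other_neighbors exy; rewrite deg_end // => -[].
move/esym/eqP; rewrite cards_eq0 => /eqP none.
rewrite part_charge_rec // big_pred0 ?addr0 // => z.
by have := in_set0 z; rewrite -none inE.
Qed.

Lemma part_charge_inner {x y} : isInner (kind x) -> e x y -> exists z1 z2,
  [/\ z1 != z2, z1 != y, z2 != y, e x z1 & e x z2] /\
  (forall z, e x z -> z != y -> z = z1 \/ z = z2) /\ pc x y = pc z1 x + pc z2 x.
Proof.
move=> inner_x exy; have := card_other_neighbors exy; rewrite deg_inner // => -[].
move/esym/eqP/cards2P => [z1 [z2 [z12 others]]].
have other z : (z \in [set z1; z2]) = e x z && (z != y) by rewrite -others inE.
have /andP[exz1 z1y] : e x z1 && (z1 != y) by rewrite -other !inE eqxx.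
have /andP[exz2 z2y] : e x z2 && (z2 != y) by rewrite -other !inE eqxx orbT.
exists z1, z2; split=> //; split.
  by move=> z exz zy; have := other z; rewrite exz zy !inE => /orP[] /eqP; [left | right].
rewrite part_charge_rec //; have -> : charge (kind x) = 0 by case: (kind x) inner_x.
rewrite add0r (eq_bigl (fun z => z \in [set z1; z2])) => [|z]; last by rewrite -other.
by rewrite big_setU1 ?big_set1 //= inE.
Qed.

Lemma black_neighbor {b z} : isBlack (kind b) -> e b z ->
  (isBud (kind z) /\ pc z b = -1) \/ wb_edge e kind z b.
Proof.
move=> black_b ebz; have ezb : e z b by rewrite e_sym.
case kz: (kind z); case kb: (kind b) black_b => // _.
- by have := inner_bw _ _ ebz; rewrite /isInner kb kz => /(_ isT isT).
- by right; rewrite /wb_edge ezb kz kb.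
- by left; rewrite part_charge_end ?kz.
- by have := leaf_white _ _ ezb; rewrite kz kb => /(_ isT).
Qed.

Lemma white_neighbor {w z} : isWhite (kind w) -> e w z ->
  (isLeaf (kind z) /\ pc z w = 1) \/ wb_edge e kind w z.
Proof.
move=> white_w ewz; have ezw : e z w by rewrite e_sym.
case kz: (kind z); case kw: (kind w) white_w => // _.
- by right; rewrite /wb_edge ewz kz kw.
- by have := inner_bw _ _ ewz; rewrite /isInner kw kz => /(_ isT isT).
- by have := bud_black _ _ ezw; rewrite kz kw => /(_ isT).
- by left; rewrite part_charge_end ?kz.
Qed.

Lemma branch_residue_adj {x z} : isInner (kind x) -> e x z ->
  branch_residue (kind z) = - branch_residue (kind x).
Proof.
move=> /orP[black_x | white_x] exz.
  case: (black_neighbor black_x exz) => [[kz _] | /and3P[_ kz _]];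
  by move: black_x kz; case: (kind x); case: (kind z).
case: (white_neighbor white_x exz) => [[kz _] | /and3P[_ _ kz]];
by move: white_x kz; case: (kind x); case: (kind z).
Qed.

Lemma part_charge_mod3 {x y} : e x y -> (pc x y = branch_residue (kind x) %[mod 3])%Z.
Proof.
move: x y; apply: branch_ind => x y exy IH.
have [inner_x | end_x] := boolP (isInner (kind x)); last first.
  by rewrite part_charge_end //; case: (kind x) end_x.
have [z1 [z2 [[_ z1y z2y exz1 exz2] [_ ->]]]] := part_charge_inner inner_x exy.
have := IH _ exz1 z1y; have := IH _ exz2 z2y.
rewrite (branch_residue_adj inner_x exz1) (branch_residue_adj inner_x exz2).
move=> mod2 mod1; rewrite -modzDm mod1 mod2 modzDm.
by case: (kind x).
Qed.

Section Admissible.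
Variable occ : V -> bool.
Hypothesis admissible_edge : forall w b, wb_edge e kind w b ->
  (HP occ w b -> regular e kind w b) /\ (NHP occ w b -> ~ regular e kind w b).

Lemma HP_part_charge {w b} : wb_edge e kind w b -> HP occ w b ->
  2 <= pc w b /\ pc b w <= 1.
Proof.
move=> wb hp; have [_ qb] := (admissible_edge _ _ wb).1 hp.
have [ewb _ _] := and3P wb; have := part_chargeC ewb; rewrite /q_black in qb; lra.
Qed.

Lemma NHP_part_charge {w b} : wb_edge e kind w b -> NHP occ w b ->
  pc w b <= -1 /\ 4 <= pc b w.
Proof.
move=> wb nhp; have nonregular := (admissible_edge _ _ wb).2 nhp.
have [ewb white_w _] := and3P wb; have := part_chargeC ewb.
have := part_charge_mod3 ewb; case: (kind w) white_w => // _ /= mod3 sum.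
have [ge2 | lt2] := lerP 2 (pc w b); last lia.
by exfalso; apply: nonregular; rewrite /regular /q_white /q_black; lra.
Qed.

Lemma white_empty_edge {w b} : wb_edge e kind w b -> ~~ occ w -> pc w b = 2 /\ pc b w = 1.
Proof.
move=> wb ow; have [ewb white_w _] := and3P wb.
have hp z : HP occ w z by rewrite /HP /NHP (negbTE ow).
have inner_w : isInner (kind w) by rewrite /isInner white_w orbT.
have [z1 [z2 [[_ _ _ ewz1 ewz2] [_ pc_wb]]]] := part_charge_inner inner_w ewb.
have le1 z : e w z -> pc z w <= 1.
  move=> ewz; case: (white_neighbor white_w ewz) => [[_ ->] // | wz].
  exact: (HP_part_charge wz (hp z)).2.
have := HP_part_charge wb (hp b); have := le1 _ ewz1; have := le1 _ ewz2.
have := part_chargeC ewb; lra.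
Qed.

Lemma black_empty_edge {w b} : wb_edge e kind w b -> ~~ occ b ->
  pc b w = 1 \/ pc b w = -2 /\ (forall y, e b y -> y != w -> isBud (kind y)).
Proof.
move=> wb ob; have [ewb _ black_b] := and3P wb; have ebw : e b w by rewrite e_sym.
have hp z : HP occ z b by rewrite /HP /NHP (negbTE ob) andbF.
have inner_b : isInner (kind b) by rewrite /isInner black_b.
have [z1 [z2 [[_ _ _ ebz1 ebz2] [others pc_bw]]]] := part_charge_inner inner_b ebw.
have [_ le1] := HP_part_charge wb (hp w).
have bud_or_ge2 z : e b z -> (isBud (kind z) /\ pc z b = -1) \/ 2 <= pc z b.
  move=> ebz; case: (black_neighbor black_b ebz) => [| zb]; first by left.
  by right; apply: (HP_part_charge zb (hp z)).1.
case: (bud_or_ge2 _ ebz1) => [[bud1 pc1] | ge1]; case: (bud_or_ge2 _ ebz2) => [[bud2 pc2] | ge2];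
  try by left; lra.
right; split; first lra.
by move=> y eby yw; case: (others y eby yw) => ->.
Qed.

Lemma NHP_edge_black_end {w v} : wb_edge e kind w v -> occ w -> occ v ->
  pc v w = 4 /\ forall x, e v x -> x != w -> isWhite (kind x) && ~~ occ x.
Proof.
move=> wv ow ov; have [ewv _ black_v] := and3P wv; have evw : e v w by rewrite e_sym.
have nhp : NHP occ w v by rewrite /NHP ow ov.
have [_ ge4] := NHP_part_charge wv nhp.
have inner_v : isInner (kind v) by rewrite /isInner black_v.
have [z1 [z2 [[_ _ _ evz1 evz2] [others pc_v]]]] := part_charge_inner inner_v evw.
have neighbor z : e v z -> pc z v <= -1 \/ isWhite (kind z) && ~~ occ z /\ pc z v = 2.
  move=> evz; case: (black_neighbor black_v evz) => [[_ ->] | zv]; first by left.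
  have [_ white_z _] := and3P zv; case oz: (occ z).
    by left; apply: (NHP_part_charge zv _).1; rewrite /NHP oz ov.
  by right; rewrite white_z; split=> //; apply: (white_empty_edge zv _).1; rewrite oz.
case: (neighbor _ evz1) => [le1 | [white1 pc1]]; case: (neighbor _ evz2) => [le2 | [white2 pc2]];
  try by exfalso; lra.
split; first lra.
by move=> x evx xw; case: (others x evx xw) => ->.
Qed.

Variant occupied_white_neighbor_spec (w z : V) : int -> Prop :=
  | OWNeighborLight of isLeaf (kind z) || isBlack (kind z) && ~~ occ z :
      occupied_white_neighbor_spec w z 1
  | OWNeighborNHP of isBlack (kind z) && occ z :
      occupied_white_neighbor_spec w z 4
  | OWNeighborBudded of isBlack (kind z) && ~~ occ z &
      (forall y, e z y -> y != w -> isBud (kind y)) :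
      occupied_white_neighbor_spec w z (-2).

Lemma occupied_white_neighbor {w z} : isWhite (kind w) -> occ w -> e w z ->
  occupied_white_neighbor_spec w z (pc z w).
Proof.
move=> white_w ow ewz; case: (white_neighbor white_w ewz) => [[leaf_z ->] | wz].
  by constructor; rewrite leaf_z.
have [_ _ black_z] := and3P wz; case oz: (occ z).
  by rewrite (NHP_edge_black_end wz ow oz).1; constructor; rewrite black_z oz.
have [-> | [-> buds]] := black_empty_edge wz (negbT oz); constructor;
  by rewrite ?black_z ?oz ?orbT.
Qed.

Lemma card_NHP_edges_at_white {w z} : isWhite (kind w) -> occ w -> e w z ->
  isBlack (kind z) && occ z ->
  (forall y, e w y -> y != z -> ~~ (isBlack (kind y) && occ y)) ->
  #|[set y | wb_edge e kind w y && NHP occ w y]| = 1%N.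
Proof.
move=> white_w ow ewz /andP[black_z oz] others; rewrite -(cards1 z).
apply: eq_card => y; rewrite !inE /wb_edge /NHP white_w ow /=.
have [-> | yz] := eqVneq y z; first by rewrite ewz black_z oz.
by apply/negbTE/negP => /andP[/andP[ewy black_y] oy]; have := others y ewy yz; rewrite black_y oy.
Qed.

Lemma NHP_edge_type w v : wb_edge e kind w v -> occ v -> occ w ->
  q_white e kind w v = -1 /\ q_black e kind w v = 4 /\
  (forall x, e v x -> x != w -> isWhite (kind x) && ~~ occ x) /\
  exists b1 x,
    b1 != v /\ x != v /\ x != b1 /\ e w b1 /\ e w x /\
    (isBlack (kind b1) && ~~ occ b1 /\ forall y, e b1 y -> y != w -> isBud (kind y)) /\
    (isLeaf (kind x) || (isBlack (kind x) && ~~ occ x)).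
Proof.
move=> wv ov ow; have [ewv white_w _] := and3P wv.
have [pc_vw white_empty] := NHP_edge_black_end wv ow ov.
have pc_wv : pc w v = -1 by have := part_chargeC ewv; lra.
rewrite /q_white /q_black pc_wv pc_vw; do 3!split=> //.
have inner_w : isInner (kind w) by rewrite /isInner white_w orbT.
have [z1 [z2 [[z12 z1v z2v ewz1 ewz2] [_ pc_w]]]] := part_charge_inner inner_w ewv.
move: pc_w; rewrite pc_wv.
case: (occupied_white_neighbor white_w ow ewz1) => [light1 | nhp1 | empty1 buds1];
case: (occupied_white_neighbor white_w ow ewz2) => [light2 | nhp2 | empty2 buds2];
  move=> sum; try by exfalso; lra.
- by exists z2, z1; do !split.
- by exists z1, z2; rewrite [z2 == z1]eq_sym; do !split.
Qed.

Lemma black_empty_edge_type w b : wb_edge e kind w b -> ~~ occ b -> occ w ->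
  (q_white e kind w b = 2 /\ q_black e kind w b = 1) \/
  (q_white e kind w b = 5 /\ q_black e kind w b = -2 /\
   (forall y, e b y -> y != w -> isBud (kind y)) /\
   #|[set y | wb_edge e kind w y && NHP occ w y]| = 1%N).
Proof.
move=> wb ob ow; have [ewb white_w _] := and3P wb.
rewrite /q_white /q_black; have := part_chargeC ewb.
case: (black_empty_edge wb ob) => [-> | [-> buds]] sum; first by left; split=> //; lra.
have pc_wb : pc w b = 5 by lra.
right; rewrite pc_wb; do 3!split=> //.
have inner_w : isInner (kind w) by rewrite /isInner white_w orbT.
have [z1 [z2 [[_ _ _ ewz1 ewz2] [others pc_w]]]] := part_charge_inner inner_w ewb.
have nhp_b : ~~ (isBlack (kind b) && occ b) by rewrite (negbTE ob) andbF.
have light_not_nhp z : isLeaf (kind z) || isBlack (kind z) && ~~ occ z ->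
    ~~ (isBlack (kind z) && occ z).
  by case: (kind z); case: (occ z).
move: pc_w; rewrite pc_wb.
case: (occupied_white_neighbor white_w ow ewz1) => [light1 | nhp1 | empty1 buds1];
case: (occupied_white_neighbor white_w ow ewz2) => [light2 | nhp2 | empty2 buds2];
  move=> sum5; try by exfalso; lra.
- apply: (card_NHP_edges_at_white white_w ow ewz2 nhp2) => y ewy yz2.
  have [-> // | yb] := eqVneq y b.
  by case: (others y ewy yb) => yz; [rewrite yz light_not_nhp | rewrite yz eqxx in yz2].
- apply: (card_NHP_edges_at_white white_w ow ewz1 nhp1) => y ewy yz1.
  have [-> // | yb] := eqVneq y b.
  by case: (others y ewy yb) => yz; [rewrite yz eqxx in yz1 | rewrite yz light_not_nhp].
Qed.

End Admissible.
End PartCharges.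
End Branches.

Theorem mainTheorem3 (V : finType) (e : rel V) (kind : V -> vkind) (occ : V -> bool) :
  admissible e kind occ ->
  (* (i) every inner edge at a white-empty vertex is of type (2:1) *)
  (forall w b, wb_edge e kind w b -> ~~ occ w ->
     q_white e kind w b = 2 /\ q_black e kind w b = 1) /\
  (* (ii) NHP edges: white-occupied w, black-occupied v *)
  (forall w v, wb_edge e kind w v -> occ v -> occ w ->
     q_white e kind w v = -1 /\ q_black e kind w v = 4 /\
     (forall x, e v x -> x != w -> isWhite (kind x) && ~~ occ x) /\
     exists b1 x,
       b1 != v /\ x != v /\ x != b1 /\ e w b1 /\ e w x /\
       (isBlack (kind b1) && ~~ occ b1 /\
        forall y, e b1 y -> y != w -> isBud (kind y)) /\
       (isLeaf (kind x) || (isBlack (kind x) && ~~ occ x))) /\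
  (* (iii) edges joining black-empty b to white-occupied w *)
  (forall w b, wb_edge e kind w b -> ~~ occ b -> occ w ->
     (q_white e kind w b = 2 /\ q_black e kind w b = 1) \/
     (q_white e kind w b = 5 /\ q_black e kind w b = -2 /\
      (forall y, e b y -> y != w -> isBud (kind y)) /\
      #|[set y | wb_edge e kind w y && NHP occ w y]| = 1%N)).
Proof.
move=> [[[e_sym e_irr e_connected e_bridge]
  [deg_inner [deg_end [bud_black [leaf_white [inner_bw charge3]]]]]] admissible_edge].
split; first exact: white_empty_edge.
by split; [exact: NHP_edge_type | exact: black_empty_edge_type].
Qed.
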